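(* Let $1\le r\le K\le d$, let $p\ge1$ and positive integers $h_1,\ldots,h_p$ with $\sum_i h_i=r$ be given. For $\bm{q}\in\{\pm1\}^r$ define $$\mathcal{Q}_{\bm{q}}=\left\{\begin{bmatrix}\bm{U}\operatorname{diag}(\bm{q})\bm{U}^T&\bm{0}\\\bm{0}&\bm{V}\end{bmatrix}:\bm{U}=\operatorname{blkdiag}(\bm{U}_1,\ldots,\bm{U}_p),\ \bm{U}_i\in\mathcal{O}^{h_i}\ (i=1,\ldots,p),\ \bm{V}\in{\rm St}(d-r,K-r)\right\}\subseteq\mathbb{R}^{d\times K}.$$ Then for any $\bm{q},\bm{q}'\in\{\pm1\}^r$, either $\mathcal{Q}_{\bm{q}}=\mathcal{Q}_{\bm{q}'}$ or $\mathcal{Q}_{\bm{q}}\cap\mathcal{Q}_{\bm{q}'}=\emptyset$; moreover, in the latter case $\operatorname{dist}(\mathcal{Q}_{\bm{q}},\mathcal{Q}_{\bm{q}'})\ge2$.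
   Context: (In the paper, $h_i$ are the multiplicities of the distinct positive singular values of a matrix $\bm{A}=\begin{bmatrix}\widetilde{\bm{A}}&\bm{0}\\\bm{0}&\bm{0}\end{bmatrix}$ with $\widetilde{\bm{A}}=\operatorname{diag}(a_1,\ldots,a_r)$, $a_1\ge\cdots\ge a_r>0$, and $\bigcup_{\bm{q}}\mathcal{Q}_{\bm{q}}$ is the set of limiting critical points of $\bm{Q}\mapsto\langle\bm{A},\bm{Q}\rangle+\delta_{{\rm St}(d,K)}(\bm{Q})$; the statement only depends on $h_1,\ldots,h_p$.) $\mathcal{O}^h$ is the set of $h\times h$ orthogonal matrices; ${\rm St}(m,k)=\{\bm{V}\in\mathbb{R}^{m\times k}:\bm{V}^T\bm{V}=\bm{I}_k\}$; $\operatorname{blkdiag}$ is the block diagonal matrix; $\operatorname{dist}(\mathcal{S},\mathcal{T})=\inf_{\bm{x}\in\mathcal{S},\bm{y}\in\mathcal{T}}\|\bm{x}-\bm{y}\|_F$. The vector $\bm{q}$ is split as $(\bm{q}_1,\ldots,\bm{q}_p)$ with $\bm{q}_i\in\{\pm1\}^{h_i}$ compatibly with the blocks. *)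

From HB Require Import structures.
From mathcomp Require Import all_boot all_order all_algebra.
From mathcomp Require Import all_classical all_reals.
Set Implicit Arguments. Unset Strict Implicit. Unset Printing Implicit Defensive.
Import Order.TTheory GRing.Theory Num.Theory.
Local Open Scope classical_set_scope.
Local Open Scope ring_scope.

Definition Stiefel (R : realType) (m k : nat) (V : 'M[R]_(m, k)) : Prop :=
  V^T *m V = 1%:M.

Definition orthogonal (R : realType) (h : nat) (U : 'M[R]_h) : Prop :=
  Stiefel U.

Definition frob (R : realType) (m n : nat) (A : 'M[R]_(m, n)) : R :=
  Num.sqrt (\sum_(i < m) \sum_(j < n) A i j ^+ 2).

Definition dist_set (R : realType) (m n : nat) (S T : set 'M[R]_(m, n)) : R :=
  inf [set frob (X - Y) | X in S & Y in T].

(* The set Q_q (q is a row vector with entries in {+1,-1}); the block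
   matrix [[U diag(q) U^T, 0],[0, V]] of size (r+(d-r)) x (r+(K-r)) is
   cast to d x K, and U = blkdiag(U_1,...,U_p) of size (\sum h_i) is
   cast to r x r. *)
Definition Qset (R : realType) (d K r p : nat) (h : 'I_p -> nat)
    (Hsum : (\sum_(i < p) h i)%N = r)
    (Hd : (r + (d - r))%N = d) (HK : (r + (K - r))%N = K)
    (q : 'rV[R]_r) : set 'M[R]_(d, K) :=
  [set X | exists (Us : forall i : 'I_p, 'M[R]_(h i)) (V : 'M[R]_(d - r, K - r)),
     (forall i, orthogonal (Us i)) /\ Stiefel V /\
     let U : 'M[R]_r := castmx (Hsum, Hsum) (\mxdiag_(i < p) Us i) in
     X = castmx (Hd, HK) (block_mx (U *m diag_mx q *m U^T) 0 0 V)].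

From HB Require Import structures.
From mathcomp Require Import all_boot all_order all_algebra fingroup perm.
From mathcomp Require Import all_classical all_reals.
From mathcomp Require Import ring lra.

Set Implicit Arguments.
Unset Strict Implicit.
Unset Printing Implicit Defensive.
Import Order.TTheory GRing.Theory Num.Theory.
Local Open Scope classical_set_scope.
Local Open Scope ring_scope.

(* Write T = U diag(q) U^T.  A block-preserving permutation matrix P with
   P diag(q) P^T = diag(q') exists as soon as q and q' have the same number of
   +1 entries in every block, and U P is again block diagonal orthogonal, so
   Q_q depends only on these counts.  If the counts differ in block i, let E be
   the coordinate projection onto block i.  Both T and T' are symmetric
   involutions commuting with E, and tr(E T) = 2 #{+1 entries in block i} - h_i.
   Since (E + E T)/2 and (E - E T')/2 are orthogonal projections, the trace of
   their product is nonnegative, which gives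
   2 |tr(E T) - tr(E T')| <= ||E (T - T') E||_F^2 <= ||T - T'||_F^2,
   and the left-hand side is at least 4. *)

Section SquaredFrobenius.
Variable R : realFieldType.

Definition sqfrob m n (A : 'M[R]_(m, n)) := \sum_i \sum_j A i j ^+ 2.

Lemma sqfrob_ge0 m n (A : 'M[R]_(m, n)) : 0 <= sqfrob A.
Proof. by apply: sumr_ge0 => i _; apply: sumr_ge0 => j _; apply: sqr_ge0. Qed.

Lemma sqfrob_trace m n (A : 'M[R]_(m, n)) : sqfrob A = \tr (A^T *m A).
Proof.
rewrite /mxtrace /sqfrob exchange_big; apply: eq_bigr => i _.
by rewrite mxE; apply: eq_bigr => j _; rewrite !mxE expr2.
Qed.

Lemma sqfrob0 m n : sqfrob (0 : 'M[R]_(m, n)) = 0.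
Proof.
by rewrite /sqfrob big1 // => i _; rewrite big1 // => j _; rewrite mxE expr0n.
Qed.

Lemma sqfrobN m n (A : 'M[R]_(m, n)) : sqfrob (- A) = sqfrob A.
Proof. by apply: eq_bigr => i _; apply: eq_bigr => j _; rewrite mxE sqrrN. Qed.

Lemma sqfrob_castmx m1 n1 m2 n2 (e : (m1 = m2) * (n1 = n2)) (A : 'M[R]_(m1, n1)) :
  sqfrob (castmx e A) = sqfrob A.
Proof. by case: e => e1 e2; case: m2 / e1; case: n2 / e2; rewrite castmx_id. Qed.

Lemma sqfrob_ulsub_le m1 m2 n1 n2 (A : 'M[R]_(m1, n1)) (B : 'M[R]_(m1, n2))
    (C : 'M[R]_(m2, n1)) (D : 'M[R]_(m2, n2)) :
  sqfrob A <= sqfrob (block_mx A B C D).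
Proof.
rewrite /sqfrob big_split_ord /= -[leLHS]addr0 lerD //; last first.
  by apply: sumr_ge0 => i _; apply: sumr_ge0 => j _; apply: sqr_ge0.
apply: ler_sum => i _; rewrite big_split_ord /= -[leLHS]addr0 lerD //.
  by under [leRHS]eq_bigr do rewrite block_mxEul.
by apply: sumr_ge0 => j _; apply: sqr_ge0.
Qed.

End SquaredFrobenius.

Lemma castmxB (V : zmodType) m1 n1 m2 n2 (e : (m1 = m2) * (n1 = n2))
    (A B : 'M[V]_(m1, n1)) :
  castmx e (A - B) = castmx e A - castmx e B.
Proof. by case: e => e1 e2; case: m2 / e1; case: n2 / e2; rewrite !castmx_id. Qed.

Lemma mxtrace_mul_proj_ge0 (R : realFieldType) n (P Q : 'M[R]_n) :
  P^T = P -> P *m P = P -> Q^T = Q -> Q *m Q = Q -> 0 <= \tr (P *m Q).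
Proof.
move=> P_sym P_idem Q_sym Q_idem.
have <- : sqfrob (P *m Q) = \tr (P *m Q).
  by rewrite sqfrob_trace trmx_mul P_sym Q_sym -mulmxA (mulmxA P P) P_idem
    mxtrace_mulC -mulmxA Q_idem.
exact: sqfrob_ge0.
Qed.

Section InvolutionsOnProjection.
Variables (R : realFieldType) (n : nat) (E : 'M[R]_n).
Hypotheses (E_sym : E^T = E) (E_idem : E *m E = E).

Definition involution_on (A : 'M[R]_n) :=
  [/\ A^T = A, E *m A = A, A *m E = A & A *m A = E].

Lemma involution_on_compress T :
  T^T = T -> T *m T = 1%:M -> T *m E = E *m T -> involution_on (E *m T).
Proof.
move=> T_sym T_invol TE; split.
- by rewrite trmx_mul E_sym T_sym TE.
- by rewrite mulmxA E_idem.
- by rewrite -mulmxA TE mulmxA E_idem.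
- by rewrite mulmxA -(mulmxA E T E) TE mulmxA E_idem -mulmxA T_invol mulmx1.
Qed.

Lemma involution_onN A : involution_on A -> involution_on (- A).
Proof.
case=> A_sym EA AE AA; split.
- by rewrite raddfN /= A_sym.
- by rewrite mulmxN EA.
- by rewrite mulNmx AE.
- by rewrite mulNmx mulmxN opprK AA.
Qed.

Lemma involution_on_proj A :
  involution_on A -> let P := 2^-1 *: (E + A) in P^T = P /\ P *m P = P.
Proof.
case=> A_sym EA AE AA P; split; first by rewrite /P linearZ /= raddfD /= E_sym A_sym.
have twice : (E + A) *m (E + A) = 2 *: (E + A).
  rewrite mulmxDl !mulmxDr E_idem EA AE AA.
  by apply/matrixP => i j; rewrite !mxE; ring.
rewrite /P -scalemxAl -scalemxAr twice !scalerA; congr (_ *: _).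
by field.
Qed.

Lemma sqfrob_sub_involution_on A B : involution_on A -> involution_on B ->
  sqfrob (A - B) = 2 * (\tr E - \tr (A *m B)).
Proof.
case=> A_sym _ _ AA [B_sym _ _ BB].
rewrite sqfrob_trace (raddfB (@trmx R n n)) /= A_sym B_sym mulmxBl !mulmxBr AA BB.
by rewrite !raddfB /= (mxtrace_mulC B A); ring.
Qed.

Lemma mxtrace_involution_on_gap A B : involution_on A -> involution_on B ->
  2 * (\tr B - \tr A) <= sqfrob (A - B).
Proof.
(* [(E + A)/2] and [(E - B)/2] are orthogonal projections. *)
move=> invA invB; rewrite sqfrob_sub_involution_on //.
have [PA_sym PA_idem] := involution_on_proj invA.
have [PB_sym PB_idem] := involution_on_proj (involution_onN invB).
have := mxtrace_mul_proj_ge0 PA_sym PA_idem PB_sym PB_idem.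
case: invA => _ _ AE _; case: invB => _ EB _ _.
rewrite -scalemxAl -scalemxAr !mxtraceZ mulmxDl !mulmxDr mulmxN mulmxN E_idem EB AE.
rewrite !mxtraceD !linearN /= pmulr_rge0 ?pmulr_rge0 ?invr_gt0 ?ltr0n //.
lra.
Qed.

Lemma normr_mxtrace_involution_on_sub A B : involution_on A -> involution_on B ->
  2 * `|\tr A - \tr B| <= sqfrob (A - B).
Proof.
move=> invA invB; have := mxtrace_involution_on_gap invA invB.
have := mxtrace_involution_on_gap invB invA.
rewrite -[B - A]opprB sqfrobN.
by case: (lerP 0 (\tr A - \tr B)) => [/ger0_norm|/ltr0_norm] ->; lra.
Qed.

End InvolutionsOnProjection.

Lemma diag_mx_perm (R : pzRingType) n (s : 'S_n) (q q' : 'rV[R]_n) :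
  (forall j, q 0 (s j) = q' 0 j) ->
  diag_mx q' = perm_mx s *m diag_mx q *m (perm_mx s)^T.
Proof.
move=> qs; apply/matrixP => j k.
rewrite mul_mx_diag [RHS]mxE (bigD1 (s j)) // big1; last first.
  by move=> l /negbTE nl; rewrite !mxE eq_sym nl !mul0r.
rewrite !mxE eqxx (inj_eq perm_inj) /= addr0 mul1r qs eq_sym.
by case: eqVneq => _; rewrite ?mulr1n ?mulr0n ?mulr1 ?mulr0.
Qed.

Definition sign_vector (R : pzRingType) n (q : 'rV[R]_n) :=
  forall j, q 0 j = 1 \/ q 0 j = -1.

Lemma sign_vector_diag_invol (R : pzRingType) n (q : 'rV[R]_n) :
  sign_vector q -> diag_mx q *m diag_mx q = 1%:M.
Proof.
move=> q_sign; rewrite mul_diag_mx; apply/matrixP => j k; rewrite !mxE.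
case: eqVneq => [->|_]; last by rewrite mulr0n mulr0.
by case: (q_sign k) => ->; rewrite ?mulrNN mulr1.
Qed.

Section BlockDiagonal.
Variables (R : realFieldType) (p : nat) (h : 'I_p -> nat).
Local Notation S := (\sum_(i < p) h i)%N.
Local Notation blk := (@tagnat.sig1 p h).

Definition is_blkdiag_mx (M : 'M[R]_S) :=
  forall j k : 'I_S, blk j != blk k -> M j k = 0.

Lemma is_blkdiag_mxdiag (B : forall i, 'M[R]_(h i)) : is_blkdiag_mx (mxdiag B).
Proof. by move=> j k /negbTE njk; rewrite /mxdiag mxE njk mxE. Qed.

Lemma is_blkdiag_mul A B :
  is_blkdiag_mx A -> is_blkdiag_mx B -> is_blkdiag_mx (A *m B).
Proof.
move=> A_bd B_bd j k njk; rewrite mxE big1 // => l _.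
case: (eqVneq (blk j) (blk l)) => [jl|njl]; last by rewrite A_bd ?mul0r.
by rewrite B_bd ?mulr0 // -jl.
Qed.

Lemma is_blkdiag_tr A : is_blkdiag_mx A -> is_blkdiag_mx A^T.
Proof. by move=> A_bd j k njk; rewrite mxE A_bd // eq_sym. Qed.

Lemma is_blkdiag_diag (q : 'rV[R]_S) : is_blkdiag_mx (diag_mx q).
Proof.
move=> j k njk; rewrite mxE; case: (eqVneq j k) => [jk|_]; last by rewrite mulr0n.
by rewrite jk eqxx in njk.
Qed.

Lemma is_blkdiag_perm (s : 'S_S) :
  (forall j, blk (s j) = blk j) -> is_blkdiag_mx (perm_mx s).
Proof.
move=> s_blk j k njk; rewrite /perm_mx !mxE; case: eqVneq => // sjk.
by move: njk; rewrite -s_blk sjk eqxx.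
Qed.

Lemma is_blkdiag_mxdiagE W : is_blkdiag_mx W -> W = mxdiag (fun i => submxblock W i i).
Proof.
move=> W_bd; rewrite -{1}[W]submxblockK /mxdiag; apply/eq_mxblockP => i j.
case: eqVneq => [<-|nij]; first by rewrite conform_mx_id.
by apply/matrixP => k l; rewrite !mxE W_bd // !tagnat.Rank1K.
Qed.

Lemma mul_mxdiag (A B : forall i, 'M[R]_(h i)) :
  mxdiag A *m mxdiag B = mxdiag (fun i => A i *m B i).
Proof.
rewrite {2}/mxdiag mul_mxdiag_mxblock /mxdiag; apply/eq_mxblockP => i j.
by case: eqVneq => [<-|_]; rewrite ?conform_mx_id ?mulmx0.
Qed.

Lemma mxdiag_orthogonalP (Us : forall i, 'M[R]_(h i)) :
  (mxdiag Us)^T *m mxdiag Us = 1%:M <-> forall i, (Us i)^T *m Us i = 1%:M.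
Proof.
rewrite tr_mxdiag mul_mxdiag -(mxdiagZ 1); split; first by move/eq_mxdiagP.
by move=> Us_orth; apply/eq_mxdiag.
Qed.

Definition blkproj i : 'M[R]_S := diag_mx (\row_j (blk j == i)%:R).

Lemma blkproj_sym i : (blkproj i)^T = blkproj i.
Proof. exact: tr_diag_mx. Qed.

Lemma blkproj_idem i : blkproj i *m blkproj i = blkproj i.
Proof.
rewrite {1}/blkproj mul_diag_mx; apply/matrixP => j k; rewrite !mxE.
by case: (blk j == i); case: (j == k); rewrite ?mul1r ?mul0r ?mulr0n.
Qed.

Lemma is_blkdiag_blkprojC A i : is_blkdiag_mx A -> A *m blkproj i = blkproj i *m A.
Proof.
move=> A_bd; rewrite mul_mx_diag mul_diag_mx; apply/matrixP => j k; rewrite !mxE.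
case: (eqVneq (blk j) (blk k)) => [->|njk]; first by rewrite mulrC.
by rewrite A_bd // mul0r mulr0.
Qed.

Lemma sqfrob_blkproj_le i (Z : 'M[R]_S) :
  sqfrob (blkproj i *m Z *m blkproj i) <= sqfrob Z.
Proof.
apply: ler_sum => j _; apply: ler_sum => k _.
rewrite mul_diag_mx mul_mx_diag !mxE.
by case: (blk j == i); case: (blk k == i);
  rewrite ?mul1r ?mulr1 ?mul0r ?mulr0 ?expr0n ?sqr_ge0.
Qed.

Definition blk_size i := (\sum_(j | blk j == i) 1)%N.

Definition blk_pos (q : 'rV[R]_S) i :=
  (\sum_(j | ((blk j == i) && (q 0 j == 1))%R) 1)%N.

Lemma mxtrace_blkproj_diag (q : 'rV[R]_S) i : sign_vector q ->
  \tr (blkproj i *m diag_mx q) = 2 * (blk_pos q i)%:R - (blk_size i)%:R.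
Proof.
move=> q_sign; have sum_indicator (P : pred 'I_S) :
    ((\sum_(j | P j) 1)%N)%:R = \sum_j (P j)%:R :> R.
  by rewrite natr_sum big_mkcond; apply: eq_bigr => j _; case: (P j).
rewrite !sum_indicator mulr_sumr -sumrB; apply: eq_bigr => j _.
rewrite mul_diag_mx !mxE eqxx mulr1n.
have m1_neq1 : (-1 : R) != 1 by apply/eqP; lra.
by case: (q_sign j) => ->; case: (blk j == i); rewrite /= ?eqxx ?(negbTE m1_neq1) /=;
  lra.
Qed.

Lemma blk_perm_of_blk_pos (q q' : 'rV[R]_S) : sign_vector q -> sign_vector q' ->
  (forall i, blk_pos q i = blk_pos q' i) ->
  exists s : 'S_S, forall j, blk (s j) = blk j /\ q 0 (s j) = q' 0 j.
Proof.
move=> q_sign q'_sign pos_eq.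
pose code (v : 'rV[R]_S) := [tuple (blk j, v 0 j == 1) | j < S].
have code_count v x : count_mem x (code v)
    = if x.2 then blk_pos v x.1 else (blk_size x.1 - blk_pos v x.1)%N.
  case: x => i b; rewrite /code /= count_map -sum1_count big_enum_cond.
  case: b; first by apply: eq_bigl => j; rewrite /preim /= xpair_eqE eqb_id.
  rewrite /blk_size [in RHS](bigID (fun j => v 0 j == 1)) /blk_pos addKn.
  by apply: eq_bigl => j; rewrite /preim /= xpair_eqE eqbF_neg.
have : perm_eq (code q') (code q).
  by apply/allP => x _; apply/eqP; rewrite !code_count pos_eq.
case/tuple_permP => s code_s; exists s => j.
have := congr1 (fun l => nth (blk j, false) l j) code_s.
rewrite /= !nth_mktuple tnth_mktuple => -[-> q_eq]; split => //.
have m1_neq1 : (-1 : R) != 1 by apply/eqP; lra.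
by move: q_eq; case: (q'_sign j) => ->; case: (q_sign (s j)) => ->;
  rewrite ?eqxx ?(negbTE m1_neq1).
Qed.

Section SignConjugate.
Variables (Us : forall i, 'M[R]_(h i)) (q : 'rV[R]_S).
Hypotheses (Us_orth : forall i, (Us i)^T *m Us i = 1%:M) (q_sign : sign_vector q).

Definition sign_conj := mxdiag Us *m diag_mx q *m (mxdiag Us)^T.

Lemma sign_conj_sym : sign_conj^T = sign_conj.
Proof. by rewrite /sign_conj !trmx_mul trmxK tr_diag_mx mulmxA. Qed.

Lemma sign_conj_invol : sign_conj *m sign_conj = 1%:M.
Proof.
have UtU := proj2 (mxdiag_orthogonalP Us) Us_orth.
rewrite /sign_conj !mulmxA -(mulmxA _ _ (mxdiag Us)) UtU mulmx1.
by rewrite -(mulmxA (mxdiag Us)) sign_vector_diag_invol // mulmx1 (mulmx1C UtU).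
Qed.

Lemma is_blkdiag_sign_conj : is_blkdiag_mx sign_conj.
Proof.
apply: is_blkdiag_mul; first apply: is_blkdiag_mul.
- exact: is_blkdiag_mxdiag.
- exact: is_blkdiag_diag.
- exact/is_blkdiag_tr/is_blkdiag_mxdiag.
Qed.

Lemma mxtrace_blkproj_sign_conj i :
  \tr (blkproj i *m sign_conj) = 2 * (blk_pos q i)%:R - (blk_size i)%:R.
Proof.
have Ut_bd := is_blkdiag_tr (is_blkdiag_mxdiag Us).
have UtU := proj2 (mxdiag_orthogonalP Us) Us_orth.
rewrite /sign_conj !mulmxA mxtrace_mulC !mulmxA (is_blkdiag_blkprojC i Ut_bd).
by rewrite -(mulmxA (blkproj i)) UtU mulmx1 mxtrace_blkproj_diag.
Qed.

End SignConjugate.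

End BlockDiagonal.

Arguments blkproj {R p} h i.

Lemma frob_sqfrob (R : realType) m n (A : 'M[R]_(m, n)) : frob A = Num.sqrt (sqfrob A).
Proof. by []. Qed.

Lemma normr_natrB_ge1 (R : realFieldType) (m n : nat) :
  m != n -> 1 <= `|m%:R - n%:R : R|.
Proof.
case: ltngtP => // [mn|nm] _.
- have : m.+1%:R <= n%:R :> R by rewrite ler_nat.
  by rewrite -natr1 ltr0_norm ?subr_lt0 ?ltr_nat //; lra.
- have : n.+1%:R <= m%:R :> R by rewrite ler_nat.
  by rewrite -natr1 gtr0_norm ?subr_gt0 ?ltr_nat //; lra.
Qed.

Section Qsets.
Variables (R : realType) (p : nat) (h : 'I_p -> nat) (d K : nat).
Local Notation S := (\sum_(i < p) h i)%N.
Variables (Hd : (S + (d - S))%N = d) (HK : (S + (K - S))%N = K).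
Hypothesis HKd : (K <= d)%N.
Local Notation Q := (@Qset R d K S p h (erefl S) Hd HK).

Lemma QsetP q X : Q q X <-> exists Us V,
  [/\ forall i, (Us i)^T *m Us i = 1%:M, V^T *m V = 1%:M &
      X = castmx (Hd, HK) (block_mx (sign_conj Us q) 0 0 V)].
Proof.
by split=> -[Us [V [Us_orth [V_st X_eq]]]]; exists Us, V; move: X_eq;
  rewrite /= castmx_id.
Qed.

Lemma Qset_nonempty q : exists X, Q q X.
Proof.
pose V : 'M[R]_(d - S, K - S) := pid_mx (K - S).
have V_st : V^T *m V = 1%:M by rewrite tr_pid_mx pid_mx_id ?leq_sub2r // pid_mx_1.
eexists; apply/QsetP; exists (fun i => 1%:M), V; split=> //.
by move=> i; rewrite trmx1 mulmx1.
Qed.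

Lemma Qset_sub q q' : sign_vector q -> sign_vector q' ->
  (forall i, blk_pos q i = blk_pos q' i) -> Q q `<=` Q q'.
Proof.
move=> q_sign q'_sign pos_eq X /QsetP [Us [V [Us_orth V_st ->]]]; apply/QsetP.
have [s s_blk_sign] := blk_perm_of_blk_pos q'_sign q_sign (fun i => esym (pos_eq i)).
have s_blk j : tagnat.sig1 (s j) = tagnat.sig1 j by case: (s_blk_sign j).
have s_sign j : q' 0 (s j) = q 0 j by case: (s_blk_sign j).
set W := mxdiag Us *m perm_mx s.
have W_bd : is_blkdiag_mx W.
  by apply: is_blkdiag_mul; [exact: is_blkdiag_mxdiag | exact: is_blkdiag_perm].
have W_orth : W^T *m W = 1%:M.
  rewrite trmx_mul mulmxA -(mulmxA _ _ (mxdiag Us)).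
  rewrite (proj2 (mxdiag_orthogonalP Us) Us_orth) mulmx1.
  by rewrite tr_perm_mx -perm_mxM mulVg perm_mx1.
exists (fun i => submxblock W i i), V; split=> //.
  by apply/mxdiag_orthogonalP; rewrite -is_blkdiag_mxdiagE.
by rewrite /sign_conj -is_blkdiag_mxdiagE // (diag_mx_perm s_sign) trmx_mul !mulmxA.
Qed.

Lemma frob_Qset_ge2 q q' i X Y : sign_vector q -> sign_vector q' ->
  blk_pos q i != blk_pos q' i -> Q q X -> Q q' Y -> 2 <= frob (X - Y).
Proof.
move=> q_sign q'_sign pos_neq /QsetP [Us [V [Us_orth _ ->]]].
move=> /QsetP [Us' [V' [Us'_orth _ ->]]].
set T := sign_conj Us q; set T' := sign_conj Us' q'; set E : 'M[R]_S := blkproj h i.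
have E_sym : E^T = E by exact: blkproj_sym.
have E_idem : E *m E = E by exact: blkproj_idem.
have invol_compress Vs v : (forall i, (Vs i)^T *m Vs i = 1%:M) -> sign_vector v ->
    involution_on E (E *m sign_conj Vs v).
  move=> Vs_orth v_sign; apply: involution_on_compress => //.
  - exact: sign_conj_sym.
  - exact: sign_conj_invol.
  - exact/is_blkdiag_blkprojC/is_blkdiag_sign_conj.
have invol_ET := invol_compress _ _ Us_orth q_sign.
have invol_ET' := invol_compress _ _ Us'_orth q'_sign.
have compress : E *m (T - T') *m E = E *m T - E *m T'.
  by case: invol_ET => _ _ ETE _; case: invol_ET' => _ _ ET'E _;
    rewrite mulmxBr mulmxBl ETE ET'E.
have sq_ge4 : 4 <= sqfrob (T - T').
  apply: le_trans (sqfrob_blkproj_le i _); rewrite -/E compress.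
  apply: le_trans (normr_mxtrace_involution_on_sub E_sym E_idem invol_ET invol_ET').
  rewrite !mxtrace_blkproj_sign_conj // opprB addrA subrK -mulrBr normrM.
  by have := normr_natrB_ge1 R pos_neq; rewrite ger0_norm //; lra.
rewrite frob_sqfrob -castmxB sqfrob_castmx opp_block_mx add_block_mx.
have -> : 2 = Num.sqrt (2 ^+ 2) :> R by rewrite sqrtr_sqr ger0_norm.
rewrite ler_sqrt ?sqfrob_ge0 //.
by apply: le_trans (sqfrob_ulsub_le _ _ _ _); rewrite expr2; lra.
Qed.

Lemma Qset_dichotomy q q' : sign_vector q -> sign_vector q' ->
  Q q = Q q' \/ (Q q `&` Q q' = set0 /\ 2 <= dist_set (Q q) (Q q')).
Proof.
move=> q_sign q'_sign.
case: (boolP [forall i, blk_pos q i == blk_pos q' i]) => [/forallP pos_eq | ].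
  by left; apply/seteqP; split; apply: Qset_sub => // i; rewrite (eqP (pos_eq i)).
move=> /forallPn [i pos_neq]; have Q_far := frob_Qset_ge2 q_sign q'_sign pos_neq.
right; split.
  apply/seteqP; split=> // X [QX Q'X]; have := Q_far _ _ QX Q'X.
  by rewrite subrr frob_sqfrob sqfrob0 sqrtr0 => ?; lra.
apply: lb_le_inf => [|_ [X QX [Y Q'Y <-]]]; last exact: Q_far.
have [X QX] := Qset_nonempty q; have [Y Q'Y] := Qset_nonempty q'.
by exists (frob (X - Y)), X => //; exists Y.
Qed.

End Qsets.

Theorem proposition3 (R : realType) (d K r p : nat) (h : 'I_p -> nat)
  (Hr1 : (1 <= r)%N) (HrK : (r <= K)%N) (HKd : (K <= d)%N)
  (Hp : (1 <= p)%N) (Hh : forall i, (0 < h i)%N)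
  (Hsum : (\sum_(i < p) h i)%N = r)
  (q q' : 'rV[R]_r)
  (Hq : forall i, q 0 i = 1 \/ q 0 i = -1)
  (Hq' : forall i, q' 0 i = 1 \/ q' 0 i = -1) :
  let Qq := @Qset R d K r p h Hsum (subnKC (leq_trans HrK HKd)) (subnKC HrK) q in
  let Qq' := @Qset R d K r p h Hsum (subnKC (leq_trans HrK HKd)) (subnKC HrK) q' in
  Qq = Qq' \/ (Qq `&` Qq' = set0 /\ 2 <= dist_set Qq Qq').
Proof.
move: (subnKC (leq_trans HrK HKd)) (subnKC HrK) => Hd HK /=.
subst r; exact: Qset_dichotomy.
Qed.
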